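(* Let $p_1,\ldots,p_m\in[0,1]$, $\alpha\in[0,1]$, and let $h_\alpha$ and $d_\alpha$ be as in the context. Then for every nonempty $S\subseteq\{1,\ldots,m\}$, \[ d_\alpha(S)=\max_{1\le u\le |S|}\Big(1-u+\big|\{i\in S: h_\alpha p_i\le u\alpha\}\big|\Big). \]
   Context: Setting: $m$ hypotheses with $p$-values $p_1,\ldots,p_m\in[0,1]$. For $I\subseteq\{1,\ldots,m\}$ and $1\le i\le |I|$, $p_{(i:I)}$ denotes the $i$-th smallest value of $\{p_j: j\in I\}$ (as a multiset). The Simes local test rejects $I$ ($I\in\mathcal{U}_\alpha$) iff there is $1\le i\le |I|$ with $|I|\,p_{(i:I)}\le i\alpha$ (so $\emptyset\notin\mathcal{U}_\alpha$). Closed testing: $\mathcal{X}_\alpha=\{I: J\in\mathcal{U}_\alpha \text{ for all } J\supseteq I\}$ (all sets are subsets of $\{1,\ldots,m\}$). For $S\subseteq\{1,\ldots,m\}$, $t_\alpha(S)=\max\{|I|: I\subseteq S,\ I\notin\mathcal{X}_\alpha\}$ and $d_\alpha(S)=|S|-t_\alpha(S)$. Let $r_1,\ldots,r_m$ be a permutation with $p_{r_1}\le\cdots\le p_{r_m}$, $K_i=\{r_{m-i+1},\ldots,r_m\}$, and $h_\alpha=\max\{0\le i\le m: K_i\notin\mathcal{U}_\alpha\}$. *)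

(* Indices {1,...,m} are represented by 'I_m (0-based). *)
From mathcomp Require Import all_boot all_order all_algebra.
Set Implicit Arguments. Unset Strict Implicit. Unset Printing Implicit Defensive.
Import Order.TTheory GRing.Theory Num.Theory.
Local Open Scope ring_scope.

Section Simes.
Variables (R : realFieldType) (m : nat) (p : 'I_m -> R) (alpha : R).

(* p_{(i:I)} for 0-based i : the (i+1)-th smallest value of {p_j : j in I}
   as a multiset *)
Definition pord (I : {set 'I_m}) (i : nat) : R :=
  nth 0 (sort <=%R [seq p j | j <- enum I]) i.

(* Simes local test: I in U_alpha iff exists 1 <= i <= |I| with
   |I| p_{(i:I)} <= i alpha  (here i = k+1, k : 'I_|I|) *)
Definition simes_rej (I : {set 'I_m}) : bool :=
  [exists k : 'I_#|I|, #|I|%:R * pord I k <= (k.+1)%:R * alpha].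

Definition ct_rej (I : {set 'I_m}) : bool :=
  [forall J : {set 'I_m}, (I \subset J) ==> simes_rej J].

Definition t_alpha (S : {set 'I_m}) : nat :=
  \max_(I : {set 'I_m} | (I \subset S) && ~~ ct_rej I) #|I|.

Definition d_alpha (S : {set 'I_m}) : nat := #|S| - t_alpha S.

(* Given the sorting permutation r (0-based: r_{k+1} = r k),
   K_i = {r_{m-i+1},...,r_m} *)
Definition Kset (r : 'I_m -> 'I_m) (i : nat) : {set 'I_m} :=
  [set r k | k : 'I_m & m - i <= k]%N.

Definition h_alpha (r : 'I_m -> 'I_m) : nat :=
  \max_(i < m.+1 | ~~ simes_rej (Kset r i)) i.

End Simes.

(* Let N_c(A, y) be the number of j in A with c p_j <= y (nbelow).  If B
   consists of the largest p-values of A and some element of B is counted,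
   then all of A \ B is counted too, so N_c(A, y) = N_c(B, y) + |A \ B|.
   Hence the set K_n of the n largest p-values minimises N among sets of size
   n, and by maximality of h every set of more than h hypotheses is
   Simes-rejected.  Closed testing therefore rejects I iff
   N_h(I, k alpha) >= k for some 1 <= k <= |I|: a set I without such k,
   padded up to size h with the largest p-values outside I, is not
   Simes-rejected, since each of its counts is bounded by that of I or that
   of K_h.  Finally t_alpha(S) = |I| for some I of S that closed testing does
   not reject, so N_h(S, u alpha) <= N_h(I, u alpha) + |S \ I|
   <= u - 1 + d_alpha(S), with equality at the k that makes closed testing
   reject the |I| + 1 largest p-values of S. *)

From mathcomp Require Import all_boot all_order all_algebra zify.
Import Order.TTheory GRing.Theory Num.Theory.
Local Open Scope ring_scope.
Set Implicit Arguments. Unset Strict Implicit. Unset Printing Implicit Defensive.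

Lemma sorted_nth_count d (T : orderType d) (x0 : T) (s : seq T) (P : pred T) :
    (forall x y, (y <= x)%O -> P x -> P y) -> sorted <=%O s ->
  forall k, (k < size s)%N -> P (nth x0 s k) = (k < count P s)%N.
Proof.
move=> P_down; elim: s => [|a s IHs] //= sorted_as k lt_ks.
have a_le : all (Order.le a) s by apply: order_path_min sorted_as; exact: le_trans.
have noP_s : ~~ P a -> count P s = 0%N.
  move=> Pa; apply/eqP; rewrite -leqn0 leqNgt -has_count.
  by apply/hasPn => y /(allP a_le) le_ay; exact: contra (P_down _ _ le_ay) Pa.
case: k lt_ks => [|k] lt_ks /=.
  by case: (boolP (P a)) => // Pa; rewrite noP_s.
rewrite IHs ?(path_sorted sorted_as) //.
by case: (boolP (P a)) => //= Pa; rewrite noP_s.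
Qed.

Lemma card_setI_count (T : finType) (A : {set T}) (Q : pred T) :
  #|[set j in A | Q j]| = count Q (enum A).
Proof.
rewrite cardE /enum_mem -size_filter -filter_predI; congr size.
by apply: eq_filter => j /=; rewrite !inE andbC.
Qed.

Lemma card_ord_geq m n : (n <= m)%N -> #|[set k : 'I_m | m - n <= k]%N| = n.
Proof.
move=> le_nm; rewrite cardsCs card_ord.
have -> : ~: [set k : 'I_m | m - n <= k]%N = [set k in [set: 'I_m] | k < m - n]%N.
  by apply/setP => k; rewrite !inE -ltnNge.
rewrite card_setI_count enum_setT -enumT -(count_map val (fun i => i < m - n)%N).
rewrite val_enum_ord -size_filter.
have := filter_iota_ltn 0 (leq_subr n m); rewrite add0n => ->.
by rewrite size_iota subKn.
Qed.

Section CountBelow.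
Variables (R : realDomainType) (T : finType) (p : T -> R).

Definition nbelow (A : {set T}) (c y : R) : nat := #|[set j in A | c * p j <= y]|.

Lemma nbelow_le_card (A : {set T}) c y : (nbelow A c y <= #|A|)%N.
Proof. by apply/subset_leq_card/subsetP => j; rewrite inE => /andP[]. Qed.

Lemma nbelow_le_setD (A B : {set T}) c y : (nbelow A c y <= nbelow B c y + #|A :\: B|)%N.
Proof.
rewrite /nbelow -(cardsID B [set j in A | _]); apply: leq_add.
  by apply/subset_leq_card/subsetP => j; rewrite !inE => /andP[/andP[_ ->] ->].
by apply/subset_leq_card/subsetP => j; rewrite !inE => /andP[-> /andP[-> _]].
Qed.

Lemma nbelow_setD_above (A B : {set T}) b c y :
    B \subset A -> b \in B -> 0 <= c -> c * p b <= y ->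
    {in A :\: B, forall a, p a <= p b} ->
  nbelow A c y = (nbelow B c y + #|A :\: B|)%N.
Proof.
move=> sBA Bb c_ge0 le_b below_b; rewrite /nbelow -(cardsID B [set j in A | _]).
congr addn; apply: eq_card => j; rewrite !inE.
  by case: (boolP (j \in B)) => [/(subsetP sBA) -> | _]; rewrite ?andbT ?andbF.
case: (boolP (j \in B)) => //= NBj; case: (boolP (j \in A)) => //= Aj.
by apply: le_trans le_b; apply: ler_wpM2l => //; apply: below_b; rewrite inE NBj.
Qed.

Hypothesis p_ge0 : forall j, 0 <= p j.

Lemma nbelow_mono (A B : {set T}) c c' y :
  A \subset B -> c' <= c -> (nbelow A c y <= nbelow B c' y)%N.
Proof.
move=> sAB le_c; apply/subset_leq_card/subsetP => j; rewrite !inE => /andP[Aj le_y].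
by rewrite (subsetP sAB) //=; apply: le_trans le_y; exact: ler_wpM2r.
Qed.

Definition topset (B A : {set T}) : Prop :=
  B \subset A /\ {in A :\: B & B, forall a b, p a <= p b}.

Lemma exists_topset (A : {set T}) n : (n <= #|A|)%N -> exists2 B, topset B A & #|B| = n.
Proof.
elim: n => [|n IHn] le_nA.
  by exists set0; [split=> [|a b _]; rewrite ?sub0set ?inE | rewrite cards0].
have [B [sBA B_top] cardB] := IHn (ltnW le_nA).
have /set0Pn[a0 a0AB] : A :\: B != set0.
  by rewrite -card_gt0 cardsD (setIidPr sBA) cardB subn_gt0.
have [b bAB b_max] := arg_maxP p a0AB.
have /setDP[bA bNB] : b \in A :\: B := bAB.
exists (b |: B); last by rewrite cardsU1 bNB cardB.
split=> [|a c]; first by rewrite subUset sub1set bA sBA.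
rewrite !inE negb_or => /andP[/andP[_ aNB] aA] /predU1P[-> | cB].
  exact/b_max/setDP.
by apply: B_top cB; rewrite inE aNB aA.
Qed.

Lemma nbelow_topset_le (B J : {set T}) c y :
    topset B setT -> (#|B| <= #|J|)%N -> 0 <= c -> (0 < nbelow B c y)%N ->
  (nbelow B c y <= nbelow J c y)%N.
Proof.
move=> [_ B_top] le_BJ c_ge0 /card_gt0P[b]; rewrite inE => /andP[Bb le_b].
have := nbelow_setD_above (subsetT B) Bb c_ge0 le_b (fun a aNB => B_top a b aNB Bb).
have := nbelow_le_setD setT J c y.
rewrite !setTD; have := cardsC B; have := cardsC J; lia.
Qed.

End CountBelow.

Section ClosedSimes.
Variables (R : realFieldType) (m : nat) (p : 'I_m -> R) (alpha : R).
Hypothesis p_ge0 : forall j, 0 <= p j.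

Definition simes_rej_at (n : nat) (I : {set 'I_m}) : bool :=
  [exists k : 'I_#|I|, k.+1 <= nbelow p I n%:R (k.+1%:R * alpha)]%N.

Lemma simes_rej_atP n (I : {set 'I_m}) :
  reflect (exists2 k, 0 < k <= #|I| & k <= nbelow p I n%:R (k%:R * alpha))%N
          (simes_rej_at n I).
Proof.
apply: (iffP existsP) => [[k le_k] | [[|k] // /andP[_ lt_kI] le_k]].
  by exists k.+1; rewrite ?ltn_ord.
by exists (Ordinal lt_kI).
Qed.

Lemma simes_rejE (I : {set 'I_m}) : simes_rej p alpha I = simes_rej_at #|I| I.
Proof.
apply: eq_existsb => k; rewrite /pord.
rewrite (sorted_nth_count _ (P := fun x => #|I|%:R * x <= k.+1%:R * alpha)).
- by rewrite count_sort count_map -card_setI_count.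
- by move=> x y le_yx; apply: le_trans; exact: ler_wpM2l.
- exact/sort_sorted/le_total.
- by rewrite size_sort size_map -cardE.
Qed.

Lemma simes_rej_at0 n : ~~ simes_rej_at n set0.
Proof. by apply/simes_rej_atP => -[[|k]]; rewrite cards0. Qed.

Lemma simes_rej_atPn n (I : {set 'I_m}) :
  reflect (forall k, 0 < k -> nbelow p I n%:R (k%:R * alpha) < k)%N
          (~~ simes_rej_at n I).
Proof.
apply: (iffP negP) => [Nrej k k_gt0 | lt_k /simes_rej_atP[k /andP[k_gt0 _]]].
  have [le_kI | lt_Ik] := leqP k #|I|.
    rewrite ltnNge; apply/negP => le_k; apply: Nrej.
    by apply/simes_rej_atP; exists k; rewrite ?k_gt0.
  exact: leq_ltn_trans (nbelow_le_card _ _ _ _) lt_Ik.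
by rewrite leqNgt lt_k.
Qed.

Lemma simes_rej_atS n n' (I J : {set 'I_m}) :
  I \subset J -> (n' <= n)%N -> simes_rej_at n I -> simes_rej_at n' J.
Proof.
move=> sIJ le_n /simes_rej_atP[k /andP[k_gt0 le_kI] le_k]; apply/simes_rej_atP.
exists k; first by rewrite k_gt0 (leq_trans le_kI) ?subset_leq_card.
by apply: leq_trans le_k (nbelow_mono p_ge0 _ sIJ _); rewrite ler_nat.
Qed.

Variable r : 'I_m -> 'I_m.
Hypothesis r_bij : bijective r.
Hypothesis r_sorted : forall a b : 'I_m, (a <= b)%N -> p (r a) <= p (r b).

Lemma card_Kset n : (n <= m)%N -> #|Kset r n| = n.
Proof. by move=> le_nm; rewrite card_imset ?card_ord_geq //; exact: bij_inj. Qed.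

Lemma topset_Kset n : topset p (Kset r n) setT.
Proof.
split=> [|a b]; first exact: subsetT.
have [r' r'K rK'] := r_bij.
rewrite setTD in_setC => NKa /imsetP[k]; rewrite inE => le_k ->.
rewrite -(rK' a); apply/r_sorted/ltnW/(leq_trans _ le_k); rewrite ltnNge.
by apply: contra NKa => le_a; apply/imsetP; exists (r' a); rewrite ?inE ?rK'.
Qed.

Local Notation h := (h_alpha p alpha r).

Lemma h_alpha_spec : (h <= m)%N /\ ~~ simes_rej p alpha (Kset r h).
Proof.
have K0 : Kset r 0 = set0.
  by apply/setP => a; rewrite inE; apply/imsetP => -[k]; rewrite inE subn0 leqNgt ltn_ord.
have NrejK0 : ~~ simes_rej p alpha (Kset r (@ord0 m)).
  by rewrite simes_rejE /= K0 simes_rej_at0.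
rewrite /h_alpha (@bigop.bigmax_eq_arg _ ord0
  (fun i : 'I_m.+1 => ~~ simes_rej p alpha (Kset r i)) (fun i => i : nat) NrejK0).
by case: arg_maxnP => // i NrejKi _; rewrite -ltnS ltn_ord.
Qed.

Lemma h_alpha_max n : (n <= m)%N -> ~~ simes_rej p alpha (Kset r n) -> (n <= h)%N.
Proof.
rewrite -ltnS => lt_nm.
exact: (@leq_bigmax_cond _ (fun i : 'I_m.+1 => ~~ simes_rej p alpha (Kset r i))
  (fun i => i : nat) (Ordinal lt_nm)).
Qed.

Lemma simes_rej_gt_h (J : {set 'I_m}) : (h < #|J|)%N -> simes_rej p alpha J.
Proof.
move=> lt_hJ; have le_Jm : (#|J| <= m)%N by have := max_card J; rewrite card_ord.
have : simes_rej p alpha (Kset r #|J|).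
  by apply: contraLR lt_hJ; rewrite -leqNgt; exact: h_alpha_max.
rewrite !simes_rejE => /simes_rej_atP[k]; rewrite card_Kset // => k_range le_k.
apply/simes_rej_atP; exists k => //; apply: (leq_trans le_k).
apply: nbelow_topset_le (topset_Kset _) _ (ler0n _ _) _; first by rewrite card_Kset.
by apply: leq_trans le_k; case/andP: k_range.
Qed.

Lemma exists_superset_not_simes_rej (I : {set 'I_m}) :
    (#|I| <= h)%N -> ~~ simes_rej_at h I ->
  exists2 J : {set 'I_m}, I \subset J & ~~ simes_rej p alpha J.
Proof.
move=> le_Ih /simes_rej_atPn lt_I; have [le_hm NrejKh] := h_alpha_spec.
have le_pad : (h - #|I| <= #|~: I|)%N by have := cardsC I; rewrite card_ord; lia.
have [T [sTCI T_top] cardT] := exists_topset p le_pad.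
have IT0 : I :&: T = set0 by apply/eqP; rewrite setIC setI_eq0 disjoints_subset.
have cardJ : #|I :|: T| = h by rewrite cardsU IT0 cards0 subn0 cardT subnKC.
exists (I :|: T); first exact: subsetUl.
rewrite simes_rejE cardJ; apply/simes_rej_atP => -[k /andP[k_gt0 le_kh]].
rewrite cardJ in le_kh; apply/negP; rewrite -ltnNge.
case: (boolP [exists t in T, h%:R * p t <= k%:R * alpha]) => [|/existsPn NleT].
  case/existsP => t /andP[Tt le_t].
  have below_t : {in setT :\: (I :|: T), forall a, p a <= p t}.
    move=> a; rewrite setTD !inE negb_or => /andP[NIa NTa].
    by apply: T_top Tt; rewrite !inE NIa NTa.
  have JTt : t \in I :|: T by rewrite inE Tt orbT.
  have countJ := nbelow_setD_above (subsetT _) JTt (ler0n _ _) le_t below_t.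
  have countK := nbelow_le_setD p setT (Kset r h) h%:R (k%:R * alpha).
  have cardCJ : #|setT :\: (I :|: T)| = #|setT :\: Kset r h|.
    rewrite !setTD; have := cardsC (I :|: T); have := cardsC (Kset r h).
    by rewrite cardJ card_Kset //; lia.
  rewrite countJ cardCJ leq_add2r in countK; apply: leq_ltn_trans countK _.
  rewrite ltnNge; apply: contra NrejKh => le_k; rewrite simes_rejE.
  by apply/simes_rej_atP; exists k; rewrite card_Kset ?k_gt0.
apply: leq_ltn_trans (lt_I k k_gt0).
apply/subset_leq_card/subsetP => j; rewrite !inE => /andP[/orP[Ij | Tj] le_j].
  by rewrite Ij le_j.
by have := NleT j; rewrite Tj le_j.
Qed.

Lemma ct_rejE (I : {set 'I_m}) : ct_rej p alpha I = simes_rej_at h I.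
Proof.
apply/idP/idP => [ctI | rejI]; last first.
  apply/forallP => J; apply/implyP => sIJ.
  have [le_Jh | /simes_rej_gt_h //] := leqP #|J| h.
  by rewrite simes_rejE; apply: simes_rej_atS rejI.
apply: contraLR ctI => NrejI.
have [le_Ih | lt_hI] := leqP #|I| h; last first.
  move: NrejI; rewrite (simes_rej_atS (subxx I) (ltnW lt_hI)) //.
  by rewrite -simes_rejE simes_rej_gt_h.
have [J sIJ NrejJ] := exists_superset_not_simes_rej le_Ih NrejI.
by apply/forallPn; exists J; rewrite sIJ.
Qed.

Lemma t_alpha_ub (S I : {set 'I_m}) :
  I \subset S -> ~~ ct_rej p alpha I -> (#|I| <= t_alpha p alpha S)%N.
Proof.
move=> sIS NctI.
by apply: (@leq_bigmax_cond _ (fun I : {set 'I_m} => (I \subset S) && ~~ ct_rej p alpha I)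
  (fun I => #|I|)); rewrite sIS.
Qed.

Lemma t_alpha_witness (S : {set 'I_m}) :
  exists2 I : {set 'I_m}, I \subset S /\ ~~ ct_rej p alpha I & t_alpha p alpha S = #|I|.
Proof.
have Nct0 : (set0 \subset S) && ~~ ct_rej p alpha set0.
  by rewrite sub0set ct_rejE simes_rej_at0.
rewrite /t_alpha (@bigop.bigmax_eq_arg _ set0
  (fun I : {set 'I_m} => (I \subset S) && ~~ ct_rej p alpha I) (fun I => #|I|) Nct0).
by case: arg_maxnP => // I /andP[sIS NctI] _; exists I.
Qed.

Lemma nbelow_lt_d_alpha_add (S : {set 'I_m}) u : (0 < u)%N ->
  (nbelow p S h%:R (u%:R * alpha) < d_alpha p alpha S + u)%N.
Proof.
move=> u_gt0; have [I [sIS NctI] tE] := t_alpha_witness S.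
move: NctI; rewrite ct_rejE => /simes_rej_atPn/(_ u u_gt0) lt_u.
rewrite /d_alpha tE -cardsDS //; apply: leq_ltn_trans (nbelow_le_setD p S I _ _) _.
by rewrite addnC ltn_add2l.
Qed.

Lemma exists_d_alpha_add_le (S : {set 'I_m}) : S != set0 ->
  exists2 u, (0 < u <= #|S|)%N &
    (d_alpha p alpha S + u <= (nbelow p S h%:R (u%:R * alpha)).+1)%N.
Proof.
move=> S_neq0; have [lt_tS | ge_tS] := ltnP (t_alpha p alpha S) #|S|; last first.
  exists 1%N; first by rewrite leqnn card_gt0.
  by have /eqP -> : d_alpha p alpha S == 0%N by rewrite subn_eq0.
have [I [sIS I_top] cardI] := exists_topset p lt_tS.
have : ct_rej p alpha I by apply/negPn/negP => /(t_alpha_ub sIS); rewrite cardI ltnn.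
rewrite ct_rejE => /simes_rej_atP[k /andP[k_gt0 le_kI] le_k].
have /card_gt0P[b] : (0 < nbelow p I h%:R (k%:R * alpha))%N := leq_trans k_gt0 le_k.
rewrite inE => /andP[Ib le_b].
exists k; first by rewrite k_gt0 (leq_trans le_kI) // subset_leq_card.
rewrite (nbelow_setD_above sIS Ib (ler0n _ _) le_b (fun a aS => I_top a b aS Ib)).
rewrite /d_alpha -subnSK // -cardI -cardsDS // addSn ltnS addnC leq_add2r.
exact: le_k.
Qed.

End ClosedSimes.

Theorem theorem1 (R : realFieldType) (m : nat) (p : 'I_m -> R) (alpha : R)
  (r : 'I_m -> 'I_m)
  (hp : forall j, 0 <= p j <= 1)
  (halpha : 0 <= alpha <= 1)
  (hr_bij : bijective r)
  (hr_sorted : forall a b : 'I_m, (a <= b)%N -> p (r a) <= p (r b))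
  (S : {set 'I_m}) (hS : S != set0) :
  let h := h_alpha p alpha r in
  let f (u : nat) : int :=
    (1 - u%:Z + (#|[set i in S | h%:R * p i <= u%:R * alpha]|)%:Z)%R in
  (exists2 u : nat, (1 <= u <= #|S|)%N & (d_alpha p alpha S)%:Z = f u) /\
  (forall u : nat, (1 <= u <= #|S|)%N -> f u <= (d_alpha p alpha S)%:Z).
Proof.
move=> h f; have p_ge0 j : 0 <= p j by case/andP: (hp j).
have fE u : f u = (1 - u%:Z + (nbelow p S h%:R (u%:R * alpha))%:Z)%R by [].
have f_le_d u : (0 < u)%N -> f u <= (d_alpha p alpha S)%:Z.
  move/(nbelow_lt_d_alpha_add alpha p_ge0 hr_bij hr_sorted S).
  (* lia needs the convertible occurrences of the count as a single atom *)
  by rewrite fE; move: (nbelow p S _ _) => c; lia.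
split=> [|u /andP[u_gt0 _]]; last exact: f_le_d.
have [u u_range le_d] := exists_d_alpha_add_le alpha p_ge0 hr_bij hr_sorted hS.
exists u => //; apply/eqP; rewrite eq_le f_le_d; last by case/andP: u_range.
by move: le_d; rewrite fE; move: (nbelow p S _ _) => c; lia.
Qed.
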